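(* Let $r\ge1$, $n$ be integers and let $\sigma:\mathbb{Z}_n\to\{0,1\}$ be a weakly stable configuration. Then every block $[i,j]\in B(\sigma)$ has length $|[i,j]|\le r$.
   Context: Cells are elements of $\mathbb{Z}_n$, arithmetic mod $n$; $[a,b]$ denotes the cyclic interval $a,\dots,b$. The majority rule with radius $r$: $\mathrm{maj}_r(\sigma)(i)=0$ if among the cells of $[i-r,i+r]$ strictly more have value $0$ than $1$ under $\sigma$, and $=1$ otherwise. $\sigma$ is temporally periodic if $\mathrm{maj}_r(\mathrm{maj}_r(\sigma))=\sigma$. For $\beta\in\{0,1\}$, $B^\beta(\sigma)$ is the set of cell intervals $[i,j]$ with $\sigma(k)=\beta$ for all $k\in[i,j]$ and $\sigma(i-1)=\sigma(j+1)=1-\beta$; $B(\sigma)=B^0(\sigma)\cup B^1(\sigma)$. A configuration is strongly stable if every block in $B(\sigma)$ has length at least $r+1$ (equivalently, it has the form $(0^{r+1}0^*+1^{r+1}1^* )^*$), and weakly stable if it is temporally periodic and not strongly stable. *)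

From mathcomp Require Import all_boot all_order all_algebra.
Set Implicit Arguments. Unset Strict Implicit. Unset Printing Implicit Defensive.
Import GRing.Theory Num.Theory.

(* A configuration on Z_n: cells are 'I_n (identified with Z_n). *)
Definition config (n : nat) := 'I_n -> bool.

Definition cell (n : nat) (s : config n) (k : int) : bool :=
  match insub (absz (k %% (n : int))%Z) with
  | Some i => s i
  | None => false
  end.

Definition maj (n r : nat) (s : config n) : config n :=
  fun i =>
    let w := [seq cell s ((i : int) - (r : int) + (Posz t))%R | t : nat <- iota 0 (2 * r + 1)%N] in
    ~~ (count (fun b => ~~ b) w > count id w)%N.

Definition temporally_periodic (n r : nat) (s : config n) : Prop :=
  forall i, maj r (maj r s) i = s i.

Definition ilen (n : nat) (i j : 'I_n) : nat :=
  (absz (((j : int) - (i : int)) %% (n : int))%Z).+1.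

Definition is_block (n : nat) (s : config n) (beta : bool) (i j : 'I_n) : Prop :=
  (forall t, (t < ilen i j)%N -> cell s ((i : int) + (t : int))%R = beta) /\
  cell s ((i : int) - 1)%R = ~~ beta /\
  cell s ((j : int) + 1)%R = ~~ beta.

Definition in_B (n : nat) (s : config n) (i j : 'I_n) : Prop :=
  exists beta, is_block s beta i j.

Definition strongly_stable (n r : nat) (s : config n) : Prop :=
  forall i j : 'I_n, in_B s i j -> (r.+1 <= ilen i j)%N.

Definition weakly_stable (n r : nat) (s : config n) : Prop :=
  temporally_periodic r s /\ ~ strongly_stable r s.

From mathcomp Require Import all_boot all_order all_algebra.
From mathcomp Require Import zify.
Set Implicit Arguments.
Unset Strict Implicit.
Unset Printing Implicit Defensive.
Import GRing.Theory Num.Theory.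

(* A cell x is in a long run if it lies in r+1 consecutive cells of equal
   value.  The window of every cell of a long run of b's contains r+1 b's, so
   maj_r fixes long runs.  If sigma = maj_r (maj_r sigma) and x is in a long
   run of b's, so is x+1: otherwise x ends its run, sigma(x+1) = ~b and some
   cell among x+2, ..., x+r+1 is b; then the window of x+1 holds r+1 b's, so
   maj_r sigma has a long run of b's ending at x+1, which maj_r fixes, giving
   sigma(x+1) = b.  Around the cycle, a block longer than r thus puts every
   cell in a long run, which no block of length at most r allows; and weak
   stability provides such a short block. *)

Lemma neq_negb (b c : bool) : c != b -> c = ~~ b.
Proof. by case: b; case: c. Qed.

Lemma negb_neq_self (b : bool) : ~~ b <> b.
Proof. by case: b. Qed.

Local Open Scope ring_scope.

Section Runs.
Variables (n r : nat).

Lemma cell_modz (s : config n) (a b : int) :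
  (a %% n)%Z = (b %% n)%Z -> cell s a = cell s b.
Proof. by rewrite /cell => ->. Qed.

Lemma cell_shift (s : config n) (a b c : int) :
  (a %% n)%Z = (b %% n)%Z -> cell s (a + c) = cell s (b + c).
Proof. by move=> eq_ab; apply: cell_modz; rewrite -modzDml eq_ab modzDml. Qed.

Lemma eq_cell (s1 s2 : config n) (a : int) :
  s1 =1 s2 -> cell s1 a = cell s2 a.
Proof. by move=> eq_s; rewrite /cell; case: insubP. Qed.

Definition window (s : config n) (x : int) : seq bool :=
  [seq cell s (x - r%:Z + t%:Z) | t <- iota 0 (2 * r + 1)].

Lemma cell_maj (s : config n) (x : int) :
  cell (maj r s) x = ~~ (count negb (window s x) > count id (window s x))%N.
Proof.
rewrite /cell; case: insubP => [i _ val_i|out_of_range].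
  have n_gt0 : (0 < n)%N := leq_ltn_trans (leq0n i) (ltn_ord i).
  rewrite /maj /window; set w := map _ _; set w' := map _ _.
  suff -> : w = w' by [].
  apply: eq_map => t; apply: cell_modz.
  rewrite val_i gez0_abs; last by apply: modz_ge0; lia.
  by rewrite -addrA modzDml addrA.
have n0 : n = 0%N by case: n s out_of_range => // n' s /negP []; lia.
have cell0 t : cell s t = false.
  rewrite /cell; case: insubP => // i _ _; exfalso; have := ltn_ord i; lia.
rewrite /window; under eq_map do rewrite cell0.
rewrite !count_map (@eq_count _ (preim _ id) pred0) //.
rewrite (@eq_count _ (preim _ negb) predT) //.
by rewrite count_pred0 count_predT size_iota addn1.
Qed.

Lemma cell_maj_majority (s : config n) (x : int) (b : bool) (ts : seq nat) :
  uniq ts -> size ts = r.+1 ->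
  (forall t, t \in ts -> (t <= 2 * r)%N /\ cell s (x - r%:Z + t%:Z) = b) ->
  cell (maj r s) x = b.
Proof.
move=> uniq_ts size_ts ts_b.
have major : (r < count (pred1 b) (window s x))%N.
  rewrite count_map -size_filter -size_ts.
  apply: uniq_leq_size => // t /ts_b[t_le t_b].
  by rewrite mem_filter /= t_b eqxx mem_iota; apply/andP; split; lia.
have total : (count id (window s x) + count negb (window s x) = 2 * r + 1)%N.
  by rewrite (count_predC id) size_map size_iota.
rewrite cell_maj; case: b {ts_b} major => major.
  by rewrite (@eq_count _ _ id) in major; [lia | case].
by rewrite (@eq_count _ _ negb) in major; [apply/negP; lia | case].
Qed.

Definition run (s : config n) (q : int) (b : bool) : bool :=
  all (fun t => cell s (q + t%:Z) == b) (iota 0 r.+1).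

Lemma runP (s : config n) (q : int) (b : bool) :
  reflect (forall t, (t <= r)%N -> cell s (q + t%:Z) = b) (run s q b).
Proof.
apply: (iffP allP) => run_q t; rewrite ?mem_iota => t_le; apply/eqP.
  by apply: run_q; rewrite mem_iota.
by apply: run_q; lia.
Qed.

Lemma run_cell (s : config n) (q x : int) (b : bool) :
  run s q b -> q <= x <= q + r%:Z -> cell s x = b.
Proof.
move=> /runP run_q x_in; rewrite -(run_q (absz (x - q))); last lia.
by congr (cell _ _); lia.
Qed.

Lemma maj_run (s : config n) (q x : int) (b : bool) :
  run s q b -> q <= x <= q + r%:Z -> cell (maj r s) x = b.
Proof.
move=> run_q x_in.
apply: (@cell_maj_majority _ _ _ (iota (absz (q - x + r%:Z)) r.+1)).
- exact: iota_uniq.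
- exact: size_iota.
move=> t; rewrite mem_iota => t_in; split; first lia.
by apply: (run_cell run_q); lia.
Qed.

Lemma maj_run_succ (s : config n) (q : int) (b : bool) (t1 : nat) :
  run s q b -> (0 < t1 <= r)%N -> cell s (q + r%:Z + 1 + t1%:Z) = b ->
  run (maj r s) (q + 1) b.
Proof.
move=> run_q t1_in t1_b.
have maj_next : cell (maj r s) (q + r%:Z + 1) = b.
  apply: (@cell_maj_majority _ _ _ ((r + t1)%N :: iota 0 r)).
  - by rewrite /= iota_uniq mem_iota; apply/negP; lia.
  - by rewrite /= size_iota.
  move=> t; rewrite inE mem_iota => /orP[/eqP->|t_lt]; split; try lia.
    by rewrite -t1_b; congr (cell _ _); lia.
  by apply: (run_cell run_q); lia.
apply/runP => t t_le.
have [t_lt|->] : (t < r)%N \/ t = r by lia.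
  by apply: (maj_run run_q); lia.
by rewrite -maj_next; congr (cell _ _); lia.
Qed.

Definition in_long_run (s : config n) (x : int) : Prop :=
  exists2 q, q <= x <= q + r%:Z & run s q (cell s x).

Lemma in_long_run_succ (s : config n) (x : int) :
  temporally_periodic r s -> in_long_run s x -> in_long_run s (x + 1).
Proof.
move=> periodic [q x_in]; move: (cell s x) => b run_q.
have [x_lt|x_end] : x < q + r%:Z \/ x = q + r%:Z by lia.
  by exists q; [lia | rewrite (run_cell run_q) //; lia].
subst x; have [next_b|/neq_negb next_nb] := eqVneq (cell s (q + r%:Z + 1)) b.
  exists (q + 1); first lia.
  rewrite next_b; apply/runP => t t_le.
  have [t_lt|->] : (t < r)%N \/ t = r by lia.
    by apply: (run_cell run_q); lia.
  by rewrite -next_b; congr (cell _ _); lia.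
have [run_next|] := boolP (run s (q + r%:Z + 1) (~~ b)).
  by exists (q + r%:Z + 1); [lia | rewrite next_nb].
case/allPn => t1; rewrite mem_iota => t1_le /neq_negb; rewrite negbK.
case: t1 t1_le => [_|t1 t1_le t1_b].
  by rewrite addr0 next_nb => /negb_neq_self.
have t1_in : (0 < t1.+1 <= r)%N by lia.
have next_in : q + 1 <= q + r%:Z + 1 <= q + 1 + r%:Z by lia.
move: (maj_run (maj_run_succ run_q t1_in t1_b) next_in).
by rewrite (eq_cell _ periodic) next_nb => /negb_neq_self.
Qed.

Lemma in_long_run_addn (s : config n) (x : int) (k : nat) :
  temporally_periodic r s -> in_long_run s x -> in_long_run s (x + k%:Z).
Proof.
move=> periodic long_x; elim: k => [|k IHk]; first by rewrite addr0.
by rewrite -addn1 PoszD addrA; apply: in_long_run_succ.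
Qed.

Lemma in_long_run_modz (s : config n) (x y : int) :
  (x %% n)%Z = (y %% n)%Z -> in_long_run s x -> in_long_run s y.
Proof.
move=> eq_xy [q x_in /runP run_q]; exists (y + (q - x)); first lia.
apply/runP => t t_le.
rewrite -addrA (cell_shift s _ (esym eq_xy)) (cell_modz s (esym eq_xy)).
rewrite -(run_q t t_le).
by congr (cell _ _); lia.
Qed.

Lemma in_long_run_everywhere (s : config n) (x : int) :
  (0 < n)%N -> temporally_periodic r s -> in_long_run s x ->
  forall y, in_long_run s y.
Proof.
move=> n_gt0 periodic long_x y; set k := absz ((y - x) %% n)%Z.
apply: (@in_long_run_modz _ (x + k%:Z)); last exact: in_long_run_addn.
rewrite /k gez0_abs; last by apply: modz_ge0; lia.
by rewrite modzDmr addrC subrK.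
Qed.

Lemma ilen_modz (i j : 'I_n) :
  ((i%:Z + (ilen i j)%:Z) %% n)%Z = ((j%:Z + 1) %% n)%Z.
Proof.
have n_gt0 : (0 < n)%N := leq_ltn_trans (leq0n i) (ltn_ord i).
have mod_ge0 : 0 <= ((j%:Z - i%:Z) %% n)%Z by apply: modz_ge0; lia.
rewrite /ilen -addn1 PoszD gez0_abs // addrA [i%:Z + _]addrC -addrA modzDml.
by congr (_ %% _)%Z; lia.
Qed.

Lemma is_block_cell (s : config n) (b : bool) (i j : 'I_n) :
  is_block s b i j -> cell s i%:Z = b.
Proof. by case=> [/(_ 0%N isT)]; rewrite addr0. Qed.

Lemma long_block_in_long_run (s : config n) (b : bool) (i j : 'I_n) :
  is_block s b i j -> (r < ilen i j)%N -> in_long_run s i.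
Proof.
move=> blk long; exists i%:Z; first lia.
rewrite (is_block_cell blk); apply/runP => t t_le.
by case: blk => in_blk _; apply: in_blk; lia.
Qed.

Lemma short_block_not_in_long_run (s : config n) (b : bool) (i j : 'I_n) :
  is_block s b i j -> (ilen i j <= r)%N -> ~ in_long_run s i.
Proof.
move=> blk short [q i_in]; rewrite (is_block_cell blk) => /runP run_q.
case: blk => _ [before after]; apply: (@negb_neq_self b).
have [q_lt|q_eq] : q < i%:Z \/ q = i%:Z by lia.
  rewrite -before -(run_q (absz (i%:Z - 1 - q)%R)); last lia.
  by congr (cell _ _); lia.
by rewrite -after -(cell_modz s (ilen_modz i j)) -q_eq; apply: run_q.
Qed.

End Runs.

Theorem corollary1 (r n : nat) (s : config n) :
  (1 <= r)%N -> weakly_stable r s ->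
  forall i j : 'I_n, in_B s i j -> (ilen i j <= r)%N.
Proof.
move=> _ [periodic not_strong] i j [b blk].
have n_gt0 : (0 < n)%N := leq_ltn_trans (leq0n i) (ltn_ord i).
rewrite leqNgt; apply/negP => long; apply: not_strong => i0 j0 [b0 blk0].
rewrite ltnNge; apply/negP => short0.
apply: short_block_not_in_long_run blk0 short0 _.
exact: in_long_run_everywhere n_gt0 periodic (long_block_in_long_run blk long) _.
Qed.
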